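(* Let $f:\{0,1\}^3\to\{0,1\}$ be $f(x_1,x_2,x_3)=(x_1\wedge x_2)\vee(\bar x_1\wedge\bar x_2\wedge x_3)$, where $\bar y$ denotes the negation of the bit $y$. Then $Q_E(f)=2$, while every parity decision tree computing $f$ has depth at least $3$.
   Context: Quantum query model: a $t$-query quantum query algorithm on inputs $x\in\{0,1\}^m$ acts on a Hilbert space $\mathcal H_{\rm in}\otimes\mathcal H_{\rm work}\otimes\mathcal H_{\rm out}$, where $\mathcal H_{\rm in}$ has orthonormal basis $|0\rangle,\dots,|m\rangle$, $\mathcal H_{\rm work}$ is a finite-dimensional workspace of arbitrary size, and $\mathcal H_{\rm out}$ is one qubit. It is specified by input-independent unitaries $U_0,\dots,U_t$, and on input $x$ produces the state $U_tO_xU_{t-1}O_x\cdots O_xU_0|0\rangle$ ($t$ applications of $O_x$), where the oracle $O_x$ acts on $\mathcal H_{\rm in}$ by $|i\rangle\mapsto(-1)^{x_i}|i\rangle$ with the convention $x_0=0$ (and as the identity on the other registers). The output is obtained by measuring $\mathcal H_{\rm out}$ in the computational basis. The algorithm computes $h$ exactly if for every $x$ the output equals $h(x)$ with probability $1$. $Q_E(h)$ is the minimum $t$ such that some $t$-query quantum query algorithm computes $h$ exactly. A parity decision tree is a rooted binary tree in which every internal vertex has exactly two children and each internal vertex $v$ is labelled by a subset $S_v$ of input positions, and each leaf is labelled $0$ or $1$. On input $x$, evaluation starts at the root; at internal vertex $v$ the parity $\bigoplus_{i\in S_v}x_i$ is computed, and the left subtree is evaluated if it is $0$ and the right subtree if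 it is $1$; the output is the label of the leaf reached. Its depth is the maximum length of a root-to-leaf path. *)

From HB Require Import structures.
From mathcomp Require Import all_boot all_order all_algebra all_field.
Set Implicit Arguments. Unset Strict Implicit. Unset Printing Implicit Defensive.
Import Order.TTheory GRing.Theory Num.Theory.
Local Open Scope ring_scope.

Section Quantum.
Variable C : numClosedFieldType.

(* Basis of H_in (x) H_work (x) H_out: input register |0>..|m>, workspace
   of dimension w.+1 (any positive finite dimension), one output qubit. *)
Definition basisT (m w : nat) := ('I_m.+1 * 'I_w.+1 * bool)%type.
Definition qdim (m w : nat) := #|{: basisT m w}|.

(* x_i with the convention x_0 = 0; input position i in 1..m is x (i-1). *)
Definition xext (m : nat) (x : {ffun 'I_m -> bool}) (i : 'I_m.+1) : bool :=
  match unlift ord0 i with None => false | Some j => x j end.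

Definition adjoint (n : nat) (U : 'M[C]_n) : 'M[C]_n := (map_mx Num.conj U)^T.
Definition unitary (n : nat) (U : 'M[C]_n) : Prop := U *m adjoint U = 1%:M.

Definition init_state (m w : nat) : 'cV[C]_(qdim m w) :=
  \col_k (enum_val k == (ord0, ord0, false))%:R.

Definition oracle (m w : nat) (x : {ffun 'I_m -> bool}) : 'M[C]_(qdim m w) :=
  \matrix_(j, k) ((j == k)%:R *
     (if xext x (enum_val k).1.1 then -1 else 1)).

Fixpoint qstate (m w : nat) (Us : nat -> 'M[C]_(qdim m w))
    (x : {ffun 'I_m -> bool}) (k : nat) : 'cV[C]_(qdim m w) :=
  match k with
  | 0 => Us 0%N *m init_state m w
  | k'.+1 => Us k *m (oracle w x *m qstate Us x k')
  end.

Definition prob_out (m w : nat) (psi : 'cV[C]_(qdim m w)) (b : bool) : C :=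
  \sum_(k | (enum_val k).2 == b) `|psi k 0| ^+ 2.

Definition exact_alg (m : nat) (h : {ffun 'I_m -> bool} -> bool) (t : nat) : Prop :=
  exists (w : nat) (Us : nat -> 'M[C]_(qdim m w)),
    (forall k, (k <= t)%N -> unitary (Us k)) /\
    forall x, prob_out (qstate Us x t) (h x) = 1.

Definition QE_eq (m : nat) (h : {ffun 'I_m -> bool} -> bool) (q : nat) : Prop :=
  exact_alg h q /\ forall t, exact_alg h t -> (q <= t)%N.

End Quantum.

Inductive pdt (m : nat) : Type :=
| PLeaf of bool
| PNode of {set 'I_m} & pdt m & pdt m.

Fixpoint pdt_eval (m : nat) (T : pdt m) (x : {ffun 'I_m -> bool}) : bool :=
  match T with
  | PLeaf b => b
  | PNode A l r =>
      if \big[addb/false]_(i in A) x i then pdt_eval r x else pdt_eval l x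
  end.

Fixpoint pdt_depth (m : nat) (T : pdt m) : nat :=
  match T with
  | PLeaf _ => 0%N
  | PNode _ l r => (maxn (pdt_depth l) (pdt_depth r)).+1
  end.

Definition f3 (x : {ffun 'I_3 -> bool}) : bool :=
  let x1 := x (@Ordinal 3 0 isT) in
  let x2 := x (@Ordinal 3 1 isT) in
  let x3 := x (@Ordinal 3 2 isT) in
  (x1 && x2) || (~~ x1 && ~~ x2 && x3).

From HB Require Import structures.
From mathcomp Require Import all_boot all_order all_algebra all_field.
From mathcomp Require Import zify ring ssrZ.
From Stdlib Require Import BinIntDef.
Set Implicit Arguments. Unset Strict Implicit. Unset Printing Implicit Defensive.
Import Order.TTheory GRing.Theory Num.Theory.

(* Call g : F_2^m -> F_2 of degree < d when all its d-fold
   discrete derivatives g(x) + g(x + a) vanish.  Branching on a parity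
   multiplies by an affine function, so a tree of depth d computes a function
   of degree < d + 1.  The third derivative of f along e1, e2, e3 is not zero.

   Let alt p = sum_x (-1)^|x| p(x) be the top Fourier
   coefficient.  After at most one query, the acceptance probability is a
   combination of products of two oracle phases, each product ignoring one of
   the m >= 3 input bits, so its alt vanishes; but alt f = -1.

   An explicit 2-query algorithm with a 5-dimensional
   workspace whose unitaries are products of Householder reflections along
   integer vectors.  Its final state is a multiple of an integer vector that is
   computed exactly; on each input that vector vanishes on the wrong output,
   so by unitarity the right answer is obtained with probability 1. *)

Section ParityTreeDegree.
Variable m : nat.
Local Notation X := {ffun 'I_m -> bool}.

Definition shift (a x : X) : X := [ffun i => x i (+) a i].

Lemma shiftC a b x : shift a (shift b x) = shift b (shift a x).
Proof. by apply/ffunP => i; rewrite !ffunE addbAC. Qed.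

Definition deriv (a : X) (g : X -> bool) (x : X) : bool := g x (+) g (shift a x).

Fixpoint deg_lt (d : nat) (g : X -> bool) : Prop :=
  if d is d'.+1 then forall a, deg_lt d' (deriv a g) else forall x, g x = false.

Lemma deg_lt_ext d g h : g =1 h -> deg_lt d g -> deg_lt d h.
Proof.
elim: d g h => [|d IH] g h gh /=; first by move=> g0 x; rewrite -gh.
by move=> dg a; apply: IH (dg a) => x; rewrite /deriv !gh.
Qed.

Lemma deg_ltS d g : deg_lt d g -> deg_lt d.+1 g.
Proof.
elim: d g => [|d IH] g /=; first by move=> g0 a x; rewrite /deriv !g0.
by move=> dg a; apply: IH.
Qed.

Lemma deg_lt_leq d d' g : d <= d' -> deg_lt d g -> deg_lt d' g.
Proof. by move/subnK <-; elim: (d' - d) => // k IH /IH /deg_ltS. Qed.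

Lemma deg_lt_false d : deg_lt d (fun=> false).
Proof. by elim: d => [|d IH] //= a; apply: deg_lt_ext IH => x. Qed.

Lemma deg_lt_addb d g h :
  deg_lt d g -> deg_lt d h -> deg_lt d (fun x => g x (+) h x).
Proof.
elim: d g h => [|d IH] g h /=; first by move=> g0 h0 x; rewrite g0 h0.
move=> dg dh a; apply: deg_lt_ext (IH _ _ (dg a) (dh a)) => x.
by rewrite /deriv addbACA.
Qed.

Lemma deg_lt_andl d c g : deg_lt d g -> deg_lt d (fun x => c && g x).
Proof. by case: c => // _; apply: deg_lt_false. Qed.

Lemma deg_lt_shift d a g : deg_lt d g -> deg_lt d (fun x => g (shift a x)).
Proof.
elim: d g => [|d IH] g /=; first by move=> g0 x.
by move=> dg b; apply: deg_lt_ext (IH _ (dg b)) => x; rewrite /deriv shiftC.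
Qed.

Definition parity (A : {set 'I_m}) (x : X) : bool := \big[addb/false]_(i in A) x i.

Lemma parity_shift A a x : parity A (shift a x) = parity A x (+) parity A a.
Proof. by rewrite /parity -big_split; apply: eq_bigr => i _; rewrite ffunE. Qed.

(* multiplying by a parity raises the degree by at most one, because
   deriv a (parity A * g) = parity A * deriv a g + parity A a * g(. + a) *)
Lemma deg_lt_parity_andb d A g :
  deg_lt d g -> deg_lt d.+1 (fun x => parity A x && g x).
Proof.
elim: d g => [|d IH] g dg a; first by move=> x; rewrite /deriv !dg !andbF.
have := deg_lt_addb (IH _ (dg a)) (deg_lt_andl (parity A a) (deg_lt_shift a dg)).
apply: deg_lt_ext => x; rewrite /deriv parity_shift.
by case: (parity A x); case: (parity A a); case: (g x); case: (g _).
Qed.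

Lemma pdt_deg_lt (T : pdt m) : deg_lt (pdt_depth T).+1 (pdt_eval T).
Proof.
elim: T => [b|A l IHl r IHr] /=; first by move=> a x; rewrite /deriv addbb.
set d := maxn _ _.
have hl : deg_lt d.+1 (pdt_eval l) by apply: deg_lt_leq IHl; rewrite ltnS leq_maxl.
have hr : deg_lt d.+1 (pdt_eval r) by apply: deg_lt_leq IHr; rewrite ltnS leq_maxr.
have := deg_lt_addb (deg_ltS hl) (deg_lt_parity_andb A (deg_lt_addb hl hr)).
apply: deg_lt_ext => x /=; rewrite /parity.
by case: (\big[addb/false]_(i in A) x i); rewrite ?addKb ?addbF.
Qed.

End ParityTreeDegree.

Definition unit3 (i : 'I_3) : {ffun 'I_3 -> bool} := [ffun j => j == i].

(* f has F_2-degree 3: its derivative along e1, e2, e3 is nonzero at 0 *)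
Lemma f3_not_deg_lt3 : ~ deg_lt 3 f3.
Proof.
move/(_ (unit3 (@Ordinal 3 0 isT)) (unit3 (@Ordinal 3 1 isT)) (unit3 (@Ordinal 3 2 isT))).
by move/(_ [ffun=> false]); rewrite /deriv /shift /f3 /unit3 !ffunE.
Qed.

Lemma pdt_depth_f3 (T : pdt 3) : (forall x, pdt_eval T x = f3 x) -> 3 <= pdt_depth T.
Proof.
move=> T_f3; rewrite leqNgt; apply/negP => depth_lt3; apply: f3_not_deg_lt3.
exact: deg_lt_ext T_f3 (deg_lt_leq depth_lt3 (pdt_deg_lt T)).
Qed.

Section Unitary.
Variable C : numClosedFieldType.
Local Open Scope ring_scope.

Lemma unitary1 n : unitary (1%:M : 'M[C]_n).
Proof. by rewrite /unitary /adjoint map_mx1 trmx1 mulmx1. Qed.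

Lemma unitary_mul n (A B : 'M[C]_n) : unitary A -> unitary B -> unitary (A *m B).
Proof.
rewrite /unitary /adjoint map_mxM trmx_mul => hA hB.
by rewrite mulmxA -(mulmxA A) hB mulmx1.
Qed.

End Unitary.

Section QueryAlgorithms.
Variables (C : numClosedFieldType) (m w : nat).
Local Open Scope ring_scope.
Local Notation n := (qdim m w).
Local Notation X := {ffun 'I_m -> bool}.

Definition sqnorm (v : 'cV[C]_n) : C := \sum_k `|v k 0| ^+ 2.

Lemma sqnormE v : sqnorm v = ((map_mx Num.conj v)^T *m v) 0 0.
Proof. by rewrite mxE; apply: eq_bigr => k _; rewrite !mxE normCK mulrC. Qed.

Lemma sqnorm_unitary (U : 'M[C]_n) v : unitary U -> sqnorm (U *m v) = sqnorm v.
Proof.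
move=> /mulmx1C UU; rewrite !sqnormE map_mxM trmx_mul !mulmxA -(mulmxA _ _ U).
by rewrite [_^T *m U]UU mulmx1.
Qed.

Definition phase (x : X) (j : 'I_n) : C := if xext x (enum_val j).1.1 then -1 else 1.

Lemma oracle_apply x (v : 'cV[C]_n) j : (oracle C w x *m v) j 0 = phase x j * v j 0.
Proof.
rewrite mxE (bigD1 j) //= big1 ?addr0; first by rewrite mxE eqxx mul1r.
by move=> k; rewrite eq_sym => /negbTE jk; rewrite mxE jk !mul0r.
Qed.

Lemma sqnorm_oracle x v : sqnorm (oracle C w x *m v) = sqnorm v.
Proof.
apply: eq_bigr => j _; rewrite oracle_apply normrM /phase.
by case: xext; rewrite ?normrN normr1 mul1r.
Qed.

Lemma sqnorm_init : sqnorm (init_state C m w) = 1.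
Proof.
rewrite /sqnorm (bigD1 (enum_rank (ord0, ord0, false))) //= big1 ?addr0.
  by rewrite mxE enum_rankK eqxx normr1 expr1n.
move=> k k_ne; rewrite mxE; case: eqP => [ek|_]; last by rewrite normr0 expr0n.
by move: k_ne; rewrite -ek enum_valK eqxx.
Qed.

Lemma sqnorm_qstate (Us : nat -> 'M[C]_n) x t :
  (forall k, (k <= t)%nat -> unitary (Us k)) -> sqnorm (qstate Us x t) = 1.
Proof.
elim: t => [|t IH] hU /=; first by rewrite sqnorm_unitary ?sqnorm_init //; apply: hU.
rewrite sqnorm_unitary ?sqnorm_oracle ?IH //; last exact: hU.
by move=> k hk; apply/hU/leqW.
Qed.

Lemma prob_out_compl (Us : nat -> 'M[C]_n) x t b :
  (forall k, (k <= t)%nat -> unitary (Us k)) ->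
  prob_out (qstate Us x t) b = 1 - prob_out (qstate Us x t) (~~ b).
Proof.
move=> hU; rewrite -(sqnorm_qstate x hU) /sqnorm (bigID (fun k => (enum_val k).2 == b)) /=.
rewrite [X in _ = _ + X - _](eq_bigl (fun k => (enum_val k).2 == ~~ b)) ?addrK // => k.
by case: b; case: (enum_val k).2.
Qed.

End QueryAlgorithms.

Section TopFourierCoefficient.
Variables (C : numClosedFieldType) (m : nat).
Local Open Scope ring_scope.
Local Notation X := {ffun 'I_m -> bool}.

Definition flip (i : 'I_m) (x : X) : X := [ffun j => (j == i) (+) x j].

Lemma flipK i : involutive (flip i).
Proof. by move=> x; apply/ffunP => j; rewrite !ffunE addKb. Qed.

Definition sgn (x : X) : C := \prod_i (-1) ^+ x i.

Lemma sgn_flip i x : sgn (flip i x) = - sgn x.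
Proof.
rewrite /sgn (bigD1 i) //= [in RHS](bigD1 i) //= ffunE eqxx -mulNr.
congr (_ * _); last by apply: eq_bigr => j /negbTE ji; rewrite ffunE ji.
by case: (x i); rewrite ?expr0 ?expr1 ?opprK.
Qed.

Definition alt (F : X -> C) : C := \sum_x sgn x * F x.

Lemma alt_flip_invariant i F : (forall x, F (flip i x) = F x) -> alt F = 0.
Proof.
move=> hF; have altN : alt F = - alt F.
  rewrite {1}/alt (reindex_inj (can_inj (flipK i))) /alt -sumrN.
  by apply: eq_bigr => x _; rewrite hF sgn_flip mulNr.
have : 2%:R * alt F = 0 by rewrite mulr_natl mulr2n {1}altN addNr.
by move/eqP; rewrite mulf_eq0 pnatr_eq0 => /eqP.
Qed.

Lemma alt_ext F G : F =1 G -> alt F = alt G.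
Proof. by move=> FG; apply: eq_bigr => x _; rewrite FG. Qed.

Lemma alt_sum (I : finType) (P : pred I) (G : I -> X -> C) :
  alt (fun x => \sum_(i | P i) G i x) = \sum_(i | P i) alt (G i).
Proof. by rewrite /alt; under eq_bigr do rewrite mulr_sumr; rewrite exchange_big. Qed.

Lemma alt_scale c F : alt (fun x => c * F x) = c * alt F.
Proof. by rewrite /alt mulr_sumr; apply: eq_bigr => x _; rewrite mulrCA. Qed.

Lemma xext_flip i x (k : 'I_m.+1) : k != lift ord0 i -> xext (flip i x) k = xext x k.
Proof.
rewrite /xext; case: unliftP => [j|//] ->{k}; rewrite ffunE (inj_eq (@lift_inj _ ord0)).
by case: eqP.
Qed.

Lemma free_coordinate (k1 k2 : 'I_m.+1) : (2 < m)%nat ->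
  exists i : 'I_m, (k1 != lift ord0 i) && (k2 != lift ord0 i).
Proof.
move=> m_gt2.
pose c := (if (k1 != 1 :> nat) && (k2 != 1 :> nat) then 0
           else if (k1 != 2 :> nat) && (k2 != 2 :> nat) then 1 else 2)%nat.
have c_lt : (c < m)%nat by rewrite /c; case: ifP; [|case: ifP] => *; lia.
exists (Ordinal c_lt); rewrite -!(inj_eq val_inj) /= /bump /= add1n /c.
by case: ifP; [|case: ifP] => *; lia.
Qed.

End TopFourierCoefficient.

Section AtMostOneQuery.
Variables (C : numClosedFieldType) (m w : nat).
Local Open Scope ring_scope.
Local Notation n := (qdim m w).

Lemma conj_phase (x : {ffun 'I_m -> bool}) (j : 'I_n) : (phase C x j)^* = phase C x j.
Proof. by rewrite /phase; case: xext; rewrite ?rmorphN rmorph1. Qed.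

Lemma prob_one_query (U : 'M[C]_n) (phi : 'cV[C]_n) x :
  prob_out (U *m (oracle C w x *m phi)) true =
  \sum_(k | (enum_val k).2 == true) \sum_j \sum_l
     (U k j * phi j 0 * (U k l * phi l 0)^*) * (phase C x j * phase C x l).
Proof.
apply: eq_bigr => k _; rewrite normCK mxE rmorph_sum mulr_suml.
apply: eq_bigr => j _; rewrite mulr_sumr; apply: eq_bigr => l _.
rewrite !oracle_apply !rmorphM /= conj_phase; ring.
Qed.

Lemma alt_phase2 (m_gt2 : (2 < m)%nat) (j l : 'I_n) :
  alt (fun x => phase C x j * phase C x l) = 0.
Proof.
have [i /andP[ji li]] := free_coordinate (enum_val j).1.1 (enum_val l).1.1 m_gt2.
by apply: (alt_flip_invariant (i := i)) => x; rewrite /phase !xext_flip.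
Qed.

Lemma alt_acceptance (m_gt2 : (2 < m)%nat) (Us : nat -> 'M[C]_n) t : (t <= 1)%nat ->
  alt (fun x => prob_out (qstate Us x t) true) = 0.
Proof.
case: t => [|[|//]] _ /=.
  exact: (alt_flip_invariant (i := Ordinal (ltnW (ltnW m_gt2)))).
rewrite (alt_ext (fun x => prob_one_query _ _ x)) alt_sum big1 // => k _.
rewrite alt_sum big1 // => j _; rewrite alt_sum big1 // => l _.
by rewrite alt_scale alt_phase2 ?mulr0.
Qed.

End AtMostOneQuery.

Section QueryLowerBound.
Variable C : numClosedFieldType.
Local Open Scope ring_scope.

Lemma exact_alg_alt m (h : {ffun 'I_m -> bool} -> bool) t :
  (2 < m)%nat -> exact_alg C h t -> (t <= 1)%nat -> alt (fun x => (h x)%:R) = 0 :> C.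
Proof.
move=> m_gt2 [w [Us [hU hexact]]] t_le1; rewrite -(alt_acceptance m_gt2 Us t_le1).
apply: alt_ext => x; have := hexact x; case: (h x) => [-> //|hx].
by rewrite (prob_out_compl x true hU) hx subrr.
Qed.

Definition ffun3 (b : bool * bool * bool) : {ffun 'I_3 -> bool} :=
  [ffun i : 'I_3 => nth false [:: b.1.1; b.1.2; b.2] i].

Lemma sum_ffun3 (G : {ffun 'I_3 -> bool} -> C) :
  \sum_x G x = \sum_(a : bool) \sum_(b : bool) \sum_(c : bool) G (ffun3 (a, b, c)).
Proof.
have ffun3_inj : injective ffun3.
  move=> [[a b] c] [[a' b'] c'] /ffunP e.
  have := e ord0; have := e (lift ord0 ord0); have := e ord_max.
  by rewrite !ffunE /= => -> -> ->.
have ffun3_bij : bijective ffun3.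
  by apply: (inj_card_bij ffun3_inj); rewrite card_ffun !card_prod !card_bool card_ord.
rewrite (reindex ffun3) /=; last exact: onW_bij.
by rewrite pair_bigA pair_bigA; apply: eq_bigr => -[[a b] c].
Qed.

(* the top coefficient of f is that of its monomial -x1 x2 x3 *)
Lemma alt_f3 : alt (fun x => (f3 x)%:R) = -1 :> C.
Proof.
rewrite /alt sum_ffun3 !big_bool /sgn /f3 !big_ord_recl !big_ord0 /ffun3 !ffunE /=.
ring.
Qed.

Lemma QE_lower_f3 t : exact_alg C f3 t -> (2 <= t)%nat.
Proof.
move=> hexact; rewrite leqNgt; apply/negP => t_le1.
have := exact_alg_alt (isT : (2 < 3)%nat) hexact t_le1.
by rewrite alt_f3 => /eqP; rewrite oppr_eq0 oner_eq0.
Qed.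

End QueryLowerBound.

Section Householder.
Variables (C : numClosedFieldType) (n : nat).
Local Open Scope ring_scope.
Implicit Types v u : 'cV[C]_n.

Definition householder v : 'M[C]_n := 1%:M - (2 / (v^T *m v) 0 0) *: (v *m v^T).

Lemma householder_apply v u :
  householder v *m u = u - (2 / (v^T *m v) 0 0 * (v^T *m u) 0 0) *: v.
Proof.
rewrite mulmxBl mul1mx -scalemxAl -mulmxA {1}[v^T *m u]mx11_scalar.
by rewrite mul_mx_scalar scalerA.
Qed.

Lemma householder_unitary v :
  map_mx Num.conj v = v -> (v^T *m v) 0 0 != 0 -> unitary (householder v).
Proof.
move=> v_real d_neq0; set d := (v^T *m v) 0 0; set P := v *m v^T.
have conj_d : d^* = d by rewrite /d -[in RHS]v_real map_trmx -map_mxM [RHS]mxE.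
have P_sym : map_mx Num.conj P^T = P.
  by rewrite /P trmx_mul trmxK map_mxM -map_trmx v_real.
have PP : P *m P = d *: P.
  by rewrite /P mulmxA -(mulmxA v) [v^T *m v]mx11_scalar mul_mx_scalar -scalemxAl.
have self_adjoint : adjoint (householder v) = householder v.
  rewrite /adjoint /householder map_mxB map_mx1 map_mxZ linearB /= trmx1 linearZ /=.
  by rewrite -/P map_trmx P_sym -/d rmorphM fmorphV /= conj_d rmorph_nat.
rewrite /unitary self_adjoint /householder -/d -/P mulmxBl mul1mx mulmxBr mulmx1.
rewrite -scalemxAl -scalemxAr PP !scalerA opprB addrA -addrA -scalerBl.
have -> : 2 / d * (2 / d) * d - 2 / d = 2 / d by field.
by rewrite subrK.
Qed.

End Householder.

(* The 40 basis states |i>|j>|b> (input i < 4, workspace j < 5, output b) are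
   numbered by code; integer vectors are lists indexed by these numbers. *)
Definition code (t : basisT 3 4) : nat := t.1.1 * 10 + t.1.2 * 2 + t.2.

Lemma code_lt t : code t < 40.
Proof.
by case: t => [[i j] b]; have := ltn_ord i; have := ltn_ord j; rewrite /code /=; case: b; lia.
Qed.

Lemma code_in_iota t : code t \in iota 0 40.
Proof. by rewrite mem_iota code_lt. Qed.

Lemma code_div t : code t %/ 10 = t.1.1.
Proof. by case: t => [[i j] b]; have := ltn_ord j; rewrite /code /=; case: b; lia. Qed.

Lemma code_odd t : odd (code t) = t.2.
Proof.
case: t => [[i j] b]; rewrite /code /= !oddD (oddM i) (oddM j) /= !andbF.
by case: b.
Qed.

Definition decode (k : 'I_40) : basisT 3 4 := (inord (k %/ 10), inord (k %% 10 %/ 2), odd k).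

Lemma code_decode k : code (decode k) = k.
Proof. by case: k => k k_lt; rewrite /code /= !inordK; case: (boolP (odd k)) => ?; lia. Qed.

Lemma decode_code t : decode (Ordinal (code_lt t)) = t.
Proof.
case: t => [[i j] b]; rewrite /decode /= code_odd code_div inord_val.
congr (_, _, _); apply: val_inj; rewrite /= inordK /code /=; have := ltn_ord j;
  by case: b => /=; lia.
Qed.

Lemma code_inj : injective code.
Proof.
move=> t t' e; rewrite -(decode_code t) -(decode_code t'); congr decode.
exact: val_inj.
Qed.

Lemma sum_code (R : nmodType) (F : nat -> R) :
  (\sum_(k < qdim 3 4) F (code (enum_val k)) = \sum_(k < 40) F k)%R.
Proof.
rewrite /qdim -(big_enum_val (fun t => F (code t))) (reindex decode) /=.
  by apply: eq_bigr => k _; rewrite code_decode.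
exists (fun t => Ordinal (code_lt t)) => [k _|t _]; last exact: decode_code.
by apply: val_inj; rewrite /= code_decode.
Qed.

Section IntegerVectors.
Local Open Scope ring_scope.

(* sums over 0..39, written with foldr so that they evaluate by computation *)
Definition zsum (F : nat -> Z) : Z := foldr (fun k s => F k + s) 0 (iota 0 40).

Definition zdot (v u : seq Z) : Z := zsum (fun k => v`_k * u`_k).

(* the Householder reflection along v, scaled by v.v to stay integral *)
Definition zreflect (v u : seq Z) : seq Z :=
  let d := zdot v v in let s := zdot v u in
  mkseq (fun k => d * u`_k - 2 * s * v`_k) 40.

Definition zreflections (vs : seq (seq Z)) (u : seq Z) : seq Z := foldr zreflect u vs.

(* the oracle, for an extended input s : input position -> bit *)
Definition zoracle (s : nat -> bool) (u : seq Z) : seq Z :=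
  mkseq (fun k => if s (k %/ 10)%nat then - u`_k else u`_k) 40.

Definition zinit : seq Z := mkseq (fun k => (k == 0)%nat%:R) 40.

Definition zvanishes (b : bool) (u : seq Z) : bool :=
  all (fun k => (odd k != b) || (u`_k == 0)) (iota 0 40).

End IntegerVectors.

Section IntegerEmbedding.
Variable C : numClosedFieldType.
Local Open Scope ring_scope.
Local Notation n := (qdim 3 4).

Definition zC : Z -> C := intr \o int_of_Z.

Lemma zC0 : zC 0 = 0. Proof. exact: rmorph0. Qed.
Lemma zCN a : zC (- a) = - zC a. Proof. exact: rmorphN. Qed.
Lemma zCB a b : zC (a - b) = zC a - zC b. Proof. exact: rmorphB. Qed.
Lemma zCM a b : zC (a * b) = zC a * zC b. Proof. exact: rmorphM. Qed.
Lemma zC_nat k : zC k%:R = k%:R. Proof. exact: rmorph_nat. Qed.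

Lemma zC_real z : zC z \is Num.real.
Proof. exact: realz. Qed.

Lemma zC_eq0 z : (zC z == 0) = (z == 0).
Proof. by rewrite /zC /= intr_eq0 -(inj_eq (can_inj int_of_ZK)) /= rmorph0. Qed.

Lemma zC_zsum F : zC (zsum F) = \sum_(k < 40) zC (F k).
Proof.
rewrite -(big_mkord xpredT (fun k => zC (F k))) /index_iota subn0 /zsum.
by elim: (iota 0 40) => [|k s IH]; rewrite ?big_nil ?zC0 // big_cons -IH -(rmorphD zC).
Qed.

Definition vecZ (u : seq Z) : 'cV[C]_n := \col_k zC u`_(code (enum_val k)).

Lemma vecZ_real u : map_mx Num.conj (vecZ u) = vecZ u.
Proof. by apply/colP => k; rewrite !mxE conj_Creal ?zC_real. Qed.

Lemma vecZ_dot v u : ((vecZ v)^T *m vecZ u) 0 0 = zC (zdot v u).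
Proof.
rewrite mxE zC_zsum -(sum_code (fun k => zC (v`_k * u`_k))).
by apply: eq_bigr => k _; rewrite !mxE -zCM.
Qed.

Lemma householder_vecZ v u : zdot v v != 0 ->
  householder (vecZ v) *m vecZ u = (zC (zdot v v))^-1 *: vecZ (zreflect v u).
Proof.
rewrite -zC_eq0 => d_neq0; rewrite householder_apply !vecZ_dot.
apply/colP => k; rewrite !mxE nth_mkseq ?code_lt //.
by rewrite zCB !zCM zC_nat; field.
Qed.

Lemma oracle_vecZ x (s : nat -> bool) u : (forall i : 'I_4, s i = xext x i) ->
  oracle C 4 x *m vecZ u = vecZ (zoracle s u).
Proof.
move=> sx; apply/colP => k.
rewrite oracle_apply !mxE nth_mkseq ?code_lt // /phase code_div sx.
by case: xext; rewrite ?mulN1r ?mul1r -?zCN.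
Qed.

Lemma init_vecZ : init_state C 3 4 = vecZ zinit.
Proof.
apply/colP => k; rewrite !mxE nth_mkseq ?code_lt // zC_nat.
by rewrite -[0%nat]/(code (ord0, ord0, false)) (inj_eq code_inj).
Qed.

Definition represents (psi : 'cV[C]_n) (u : seq Z) : Prop := exists c : C, psi = c *: vecZ u.

Lemma represents_init : represents (init_state C 3 4) zinit.
Proof. by exists 1; rewrite scale1r init_vecZ. Qed.

Lemma represents_oracle x (s : nat -> bool) psi u : (forall i : 'I_4, s i = xext x i) ->
  represents psi u -> represents (oracle C 4 x *m psi) (zoracle s u).
Proof. by move=> sx [c ->]; exists c; rewrite -scalemxAr (oracle_vecZ _ sx). Qed.

Definition householders (vs : seq (seq Z)) : 'M[C]_n :=
  foldr (fun v M => householder (vecZ v) *m M) 1%:M vs.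

Lemma represents_householders vs psi u : all (fun v => zdot v v != 0) vs ->
  represents psi u -> represents (householders vs *m psi) (zreflections vs u).
Proof.
move=> vs_ok [c ->]; elim: vs vs_ok => [|v vs IH] /=; first by exists c; rewrite mul1mx.
case/andP => d_neq0 /IH [c' e]; exists (c' / zC (zdot v v)).
by rewrite -mulmxA e -scalemxAr householder_vecZ // scalerA.
Qed.

Lemma householders_unitary vs : all (fun v => zdot v v != 0) vs -> unitary (householders vs).
Proof.
elim: vs => [|v vs IH] /=; first by move=> _; exact: unitary1.
case/andP => d_neq0 /IH; apply: unitary_mul; apply: householder_unitary.
  exact: vecZ_real.
by rewrite vecZ_dot zC_eq0.
Qed.

Lemma represents_prob psi u b : represents psi u -> zvanishes b u -> prob_out psi b = 0.
Proof.
move=> [c ->] /allP u_vanish; apply: big1 => k /eqP out_b; rewrite !mxE.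
have /orP[|/eqP ->] := u_vanish _ (code_in_iota (enum_val k)).
  by rewrite code_odd out_b eqxx.
by rewrite zC0 mulr0 normr0 expr0n.
Qed.

End IntegerEmbedding.

Section Certificate.
Local Open Scope Z_scope.
Definition v0 : seq Z := [:: 7; 0; -3; 0; 0; 0; 0; 0; 0; 0; -5; 0; 0; 0; 0; 0; 0; 0; 0; 0;
  -5; 0; 0; 0; 0; 0; 0; 0; 0; 0; -4; 0; -4; 0; 0; 0; 0; 0; 0; 0].
Definition v1 : seq Z := [:: 8; 0; 14; 0; 5; 0; 5; 0; 0; 0; -5; 0; 0; 0; 0; 0; 0; 0; 0; 0;
  -5; 0; 0; 0; 0; 0; 0; 0; 0; 0; -6; 0; 0; 0; 0; 0; 0; 0; 0; 0].
Definition v2 : seq Z := [:: -680; 0; 592; 0; -128; 0; -128; 0; 0; 0; 1448; 0; -99; 0;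
  -297; 0; -231; 0; -33; 0; 788; 0; 1683; 0; 297; 0; 231; 0; 33; 0; -1470; 0; -198; 0;
  -396; 0; 0; 0; 0; 0].
Definition v3 : seq Z := [:: -3400; 0; 2960; 0; -640; 0; -640; 0; 0; 0; 100; 0; 18783; 0;
  4941; 0; 3843; 0; 549; 0; 11080; 0; -10863; 0; -4941; 0; -3843; 0; -549; 0; -7350; 0;
  -990; 0; -1980; 0; 0; 0; 0; 0].
Definition v4 : seq Z := [:: -8140; 0; 12512; 0; 1568; 0; 1568; 0; 0; 0; 15127; 0; -4212; 0;
  0; 0; 0; 0; 0; 0; 15127; 0; -4212; 0; 0; 0; 0; 0; 0; 0; -10815; 0; 18621; 0; 2106; 0;
  0; 0; 0; 0].
Definition v5 : seq Z := [:: 12; -40; 0; 0; 0; 0; 0; 0; 0; 0; 15; 0; -20; 0; 0; 0; 0; 0; 0; 0;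
  15; 0; -20; 0; 0; 0; 0; 0; 0; 0; -9; 0; -5; 0; -10; 0; 0; 0; 0; 0].
Definition v6 : seq Z := [:: -92; 0; -80; -120; -80; -120; -80; -120; 0; 0; -35; 0; -60; 0;
  0; 0; 0; 0; 0; 0; -35; 0; -60; 0; 0; 0; 0; 0; 0; 0; 69; 0; -15; 0; -30; 0; 0; 0; 0; 0].
End Certificate.

Definition layers : seq (seq (seq Z)) := [:: [:: v0]; [:: v4; v3; v2; v1]; [:: v6; v5]].

Definition zfinal (s : nat -> bool) : seq Z :=
  zreflections (nth [::] layers 2) (zoracle s
    (zreflections (nth [::] layers 1) (zoracle s (zreflections (nth [::] layers 0) zinit)))).

Lemma layers_nondegenerate : all (all (fun v => zdot v v != 0%R)) layers.
Proof. by vm_compute. Qed.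

Lemma layer_nondegenerate k : all (fun v => zdot v v != 0%R) (nth [::] layers k).
Proof.
case: (ltnP k (size layers)) => [k_lt|k_ge]; last by rewrite nth_default.
exact: (allP layers_nondegenerate) (mem_nth _ k_lt).
Qed.

Lemma certificate a b c :
  zvanishes (~~ ((a && b) || (~~ a && ~~ b && c))) (zfinal (nth false [:: false; a; b; c])).
Proof. by case: a; case: b; case: c; vm_compute. Qed.

Lemma xext3 (x : {ffun 'I_3 -> bool}) (i : 'I_4) :
  nth false [:: false; x (@Ordinal 3 0 isT); x (@Ordinal 3 1 isT); x (@Ordinal 3 2 isT)] i
  = xext x i.
Proof.
rewrite /xext; case: unliftP => [j|] -> //.
by case: j => [[|[|[|//]]] j_lt]; congr (x _); apply: val_inj.
Qed.

Section UpperBound.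
Variable C : numClosedFieldType.
Local Open Scope ring_scope.

Definition f3_algorithm (k : nat) : 'M[C]_(qdim 3 4) := householders C (nth [::] layers k).

Lemma f3_algorithm_unitary k : unitary (f3_algorithm k).
Proof. exact/householders_unitary/layer_nondegenerate. Qed.

Lemma f3_algorithm_state x :
  represents (qstate f3_algorithm x 2)
    (zfinal (nth false [:: false; x (@Ordinal 3 0 isT); x (@Ordinal 3 1 isT);
                          x (@Ordinal 3 2 isT)])).
Proof.
rewrite /zfinal [qstate _ _ _]/=.
do 2 (apply: represents_householders (layer_nondegenerate _) _;
      apply: represents_oracle (xext3 x) _).
apply: represents_householders (layer_nondegenerate 0) _; exact: represents_init.
Qed.

Lemma QE_upper_f3 : exact_alg C f3 2.
Proof.
exists 4, f3_algorithm; split=> [k _|x]; first exact: f3_algorithm_unitary.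
rewrite (prob_out_compl x _ (fun k _ => f3_algorithm_unitary k)).
by rewrite (represents_prob (f3_algorithm_state x) (certificate _ _ _)) subr0.
Qed.

End UpperBound.

Theorem mainTheorem7 :
  (forall C : numClosedFieldType, QE_eq C f3 2) /\
  (forall T : pdt 3, (forall x, pdt_eval T x = f3 x) -> (3 <= pdt_depth T)%N).
Proof.
split; last exact: pdt_depth_f3.
by move=> C; split; [exact: QE_upper_f3 | exact: QE_lower_f3].
Qed.
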